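(* Let $(a,b)\subset\mathbb{R}$ be a finite interval, $m,n\in\mathbb{N}$, $\varepsilon_0>0$. For each $\varepsilon\in[0,\varepsilon_0)$ let $A(\cdot;\varepsilon)\in (W^{n-1}_\infty)^{m\times m}$ and let $L(\varepsilon)\colon (W^n_\infty)^m\to(W^{n-1}_\infty)^m$, $L(\varepsilon)y:=y'+A(\cdot;\varepsilon)y$. The following three conditions are equivalent: (I) $A(\cdot;\varepsilon)\to A(\cdot;0)$ in $(W^{n-1}_\infty)^{m\times m}$ as $\varepsilon\to0+$; $(a_1)$ $\|L(\varepsilon)-L(0)\|\to0$ as $\varepsilon\to0+$, where $\|\cdot\|$ is the operator norm from $(W^n_\infty)^m$ to $(W^{n-1}_\infty)^m$; $(a_2)$ $L(\varepsilon)y\to L(0)y$ in $(W^{n-1}_\infty)^m$ as $\varepsilon\to0+$ for every $y\in(W^n_\infty)^m$.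
   Context: For an integer $k\ge0$, $W^k_\infty=W^k_\infty([a,b];\mathbb{C})$ is the Sobolev space of complex functions on $[a,b]$ whose derivatives up to order $k$ are essentially bounded, with norm $\|y\|_{k,\infty}=\sum_{j=0}^k\|y^{(j)}\|_{L_\infty}$; $W^0_\infty=L_\infty$. $(W^k_\infty)^m$, $(W^k_\infty)^{m\times m}$ denote vector/matrix functions with components in $W^k_\infty$, normed componentwise. *)

From HB Require Import structures.
From mathcomp Require Import all_boot all_order all_algebra.
From mathcomp Require Import all_classical all_reals all_analysis.
From mathcomp Require Import complex ess_sup_inf.
Set Implicit Arguments. Unset Strict Implicit. Unset Printing Implicit Defensive.
Import Order.TTheory GRing.Theory Num.Theory.
Import numFieldNormedType.Exports.
Local Open Scope classical_set_scope.
Local Open Scope ring_scope.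

Section Sobolev.
Variable R : realType.
Local Notation C := (R[i]).

Definition cderiv (f : R -> C) : R -> C :=
  fun x => Complex (derive1 (fun t => complex.Re (f t)) x) (derive1 (fun t => complex.Im (f t)) x).

Definition cderivn (j : nat) (f : R -> C) : R -> C := iter j cderiv f.

Definition cintegral (a x : R) (f : R -> C) : C :=
  Complex (\int[lebesgue_measure]_(t in `[a, x]) complex.Re (f t))
          (\int[lebesgue_measure]_(t in `[a, x]) complex.Im (f t)).

Definition Linf_norm (a b : R) (g : R -> C) : \bar R :=
  ess_sup lebesgue_measure
    (fun x => if x \in `[a, b] then (ComplexField.Normc.normc (g x))%:E else 0%E).

Definition measurable_on (a b : R) (g : R -> C) : Prop :=
  measurable_fun `[a, b] (fun x => complex.Re (g x)) /\
  measurable_fun `[a, b] (fun x => complex.Im (g x)).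

(* f belongs to W^k_oo([a,b]; C): the derivatives f, f', ..., f^(k-1) are
   absolutely continuous on [a,b] (each is the indefinite integral of the next
   one), and f, f', ..., f^(k) are measurable and essentially bounded. *)
Definition isW (a b : R) (k : nat) (f : R -> C) : Prop :=
  (forall j, (j <= k)%N ->
     measurable_on a b (cderivn j f) /\ (Linf_norm a b (cderivn j f) < +oo)%E) /\
  (forall j, (j < k)%N -> exists c : C,
     forall x, a < x < b -> cderivn j f x = c + cintegral a x (cderivn j.+1 f)).

Definition Wnorm (a b : R) (k : nat) (f : R -> C) : \bar R :=
  (\sum_(j < k.+1) Linf_norm a b (cderivn j f))%E.

Definition isWvec (a b : R) (k m : nat) (y : R -> 'cV[C]_m) : Prop :=
  forall i : 'I_m, isW a b k (fun x => y x i ord0).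

Definition Wvec_norm (a b : R) (k m : nat) (y : R -> 'cV[C]_m) : \bar R :=
  (\sum_(i < m) Wnorm a b k (fun x => y x i ord0))%E.

Definition isWmat (a b : R) (k m : nat) (A : R -> 'M[C]_m) : Prop :=
  forall i j : 'I_m, isW a b k (fun x => A x i j).

Definition Wmat_norm (a b : R) (k m : nat) (A : R -> 'M[C]_m) : \bar R :=
  (\sum_(i < m) \sum_(j < m) Wnorm a b k (fun x => A x i j))%E.

Definition vderiv (m : nat) (y : R -> 'cV[C]_m) : R -> 'cV[C]_m :=
  fun x => \col_i cderiv (fun t => y t i ord0) x.

Definition Lop (m : nat) (A : R -> 'M[C]_m) (y : R -> 'cV[C]_m) : R -> 'cV[C]_m :=
  fun x => vderiv y x + A x *m y x.

Definition op_norm_diff (a b : R) (n m : nat)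
    (L1 L2 : (R -> 'cV[C]_m) -> (R -> 'cV[C]_m)) : \bar R :=
  ereal_sup [set Wvec_norm a b n.-1 (fun x => L1 y x - L2 y x) |
              y in [set y | isWvec a b n y /\ (Wvec_norm a b n y <= 1)%E]].

End Sobolev.

(* Since L(e) y - L(0) y = (A(e) - A(0)) y involves no derivative of y, the
   Leibniz rule, which writes the j-th derivative of a product f g as a sum of
   2^j terms f^(p) g^(q) with p, q <= j, gives
     ||L(e) y - L(0) y||_{n-1,oo} <= c ||A(e) - A(0)||_{n-1,oo} ||y||_{n,oo},
   hence (I) => (a1) and (I) => (a2).  Conversely, (L(e) - L(0)) e_j is the
   j-th column of A(e) - A(0) for the constant unit vector e_j, whose norm is
   1, so ||A(e) - A(0)||_{n-1,oo} = sum_j ||(L(e) - L(0)) e_j||_{n-1,oo}, which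
   is at most m ||L(e) - L(0)|| and tends to 0 under (a2).
   The Leibniz rule is applied almost everywhere: the derivatives of order
   p <= n - 3 of a function of W^(n-1)_oo are differentiable on (a, b), and
   the one of order n - 2 is differentiable almost everywhere by Lebesgue's
   differentiation theorem. *)

From HB Require Import structures.
From mathcomp Require Import all_boot all_order all_algebra.
From mathcomp Require Import all_classical all_reals all_analysis.
From mathcomp Require Import complex ess_sup_inf.
From mathcomp Require Import measurable_realfun ring zify.
Import Order.TTheory GRing.Theory Num.Theory.
Import numFieldNormedType.Exports.
Local Open Scope classical_set_scope.
Local Open Scope ring_scope.

Section ComplexCalculus.
Context {R : realType}.
Local Notation C := R[i].
Local Notation Re := complex.Re.
Local Notation Im := complex.Im.
Local Notation normc := (@ComplexField.Normc.normc R).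

Lemma ReD (x y : C) : Re (x + y) = Re x + Re y. Proof. by case: x; case: y. Qed.
Lemma ImD (x y : C) : Im (x + y) = Im x + Im y. Proof. by case: x; case: y. Qed.
Lemma ReB (x y : C) : Re (x - y) = Re x - Re y. Proof. by case: x; case: y. Qed.
Lemma ImB (x y : C) : Im (x - y) = Im x - Im y. Proof. by case: x; case: y. Qed.
Lemma ReM (x y : C) : Re (x * y) = Re x * Re y - Im x * Im y.
Proof. by case: x; case: y. Qed.
Lemma ImM (x y : C) : Im (x * y) = Re x * Im y + Im x * Re y.
Proof. by case: x => ? ?; case: y => ? ? /=; rewrite addrC. Qed.

Lemma normc_ge0 (z : C) : 0 <= normc z.
Proof. by case: z => p q; exact: sqrtr_ge0. Qed.

Lemma normc_sum (I : Type) (s : seq I) (F : I -> C) :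
  normc (\sum_(i <- s) F i) <= \sum_(i <- s) normc (F i).
Proof.
elim: s => [|i s IH]; first by rewrite !big_nil ComplexField.Normc.normc0.
by rewrite !big_cons; apply: le_trans (le_normcD _ _) _; exact: lerD.
Qed.

Lemma Re_le_normc (z : C) : `|Re z| <= normc z.
Proof. by case: z => p q /=; rewrite -sqrtr_sqr ler_wsqrtr // lerDl sqr_ge0. Qed.

Lemma Im_le_normc (z : C) : `|Im z| <= normc z.
Proof. by case: z => p q /=; rewrite -sqrtr_sqr ler_wsqrtr // lerDr sqr_ge0. Qed.

(* Pointwise forms of derivableD/deriveD and friends: instantiating them by
   application avoids matching the library's [f + g] against large lambdas. *)
Lemma derivable_deriveD {F G : R -> R} {x : R} : derivable F x 1 -> derivable G x 1 ->
  derivable (fun t => F t + G t) x 1 /\ 'D_1 (fun t => F t + G t) x = 'D_1 F x + 'D_1 G x.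
Proof. by move=> dF dG; split; [exact: derivableD | exact: deriveD]. Qed.

Lemma derivable_deriveB {F G : R -> R} {x : R} : derivable F x 1 -> derivable G x 1 ->
  derivable (fun t => F t - G t) x 1 /\ 'D_1 (fun t => F t - G t) x = 'D_1 F x - 'D_1 G x.
Proof. by move=> dF dG; split; [exact: derivableB | exact: deriveB]. Qed.

Lemma derivable_deriveM {F G : R -> R} {x : R} : derivable F x 1 -> derivable G x 1 ->
  derivable (fun t => F t * G t) x 1 /\
  'D_1 (fun t => F t * G t) x = 'D_1 F x * G x + F x * 'D_1 G x.
Proof.
move=> dF dG; split; first exact: derivableM.
by rewrite (deriveM dF dG) /GRing.scale /= addrC mulrC [_ * G x]mulrC.
Qed.

Definition cderivable (f : R -> C) (x : R) :=
  derivable (fun t => Re (f t)) x 1 /\ derivable (fun t => Im (f t)) x 1.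

Definition is_cderive (f : R -> C) (x : R) (df : C) :=
  cderivable f x /\ cderiv f x = df.

Lemma cderivE (f : R -> C) x :
  cderiv f x = Complex ('D_1 (fun t => Re (f t)) x) ('D_1 (fun t => Im (f t)) x).
Proof. by rewrite /cderiv !derive1E. Qed.

Lemma near_eq_cderiv (f g : R -> C) x : {near x, f =1 g} -> cderiv f x = cderiv g x.
Proof.
by move=> fg; rewrite !cderivE; congr Complex; apply: near_eq_derive;
  apply: filterS fg => y ->.
Qed.

Lemma near_eq_cderivable (f g : R -> C) x :
  {near x, f =1 g} -> cderivable f x -> cderivable g x.
Proof.
by move=> fg [dRe dIm]; split; [move: dRe | move: dIm];
  apply: near_eq_derivable; apply: filterS fg => y ->.
Qed.

Lemma is_cderive_cst (c : C) x : is_cderive (fun=> c) x 0.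
Proof.
by rewrite /is_cderive cderivE !derive_cst; split => //; split; exact: derivable_cst.
Qed.

Lemma is_cderiveD {f g : R -> C} {x : R} : cderivable f x -> cderivable g x ->
  is_cderive (fun t => f t + g t) x (cderiv f x + cderiv g x).
Proof.
move=> [f1 f2] [g1 g2].
have ERe : (fun t => Re (f t + g t)) = (fun t => Re (f t) + Re (g t)).
  by apply/funext => t; rewrite ReD.
have EIm : (fun t => Im (f t + g t)) = (fun t => Im (f t) + Im (g t)).
  by apply/funext => t; rewrite ImD.
have [d1 e1] := derivable_deriveD f1 g1; have [d2 e2] := derivable_deriveD f2 g2.
by rewrite /is_cderive /cderivable !cderivE ERe EIm e1 e2.
Qed.

Lemma is_cderiveB {f g : R -> C} {x : R} : cderivable f x -> cderivable g x ->
  is_cderive (fun t => f t - g t) x (cderiv f x - cderiv g x).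
Proof.
move=> [f1 f2] [g1 g2].
have ERe : (fun t => Re (f t - g t)) = (fun t => Re (f t) - Re (g t)).
  by apply/funext => t; rewrite ReB.
have EIm : (fun t => Im (f t - g t)) = (fun t => Im (f t) - Im (g t)).
  by apply/funext => t; rewrite ImB.
have [d1 e1] := derivable_deriveB f1 g1; have [d2 e2] := derivable_deriveB f2 g2.
by rewrite /is_cderive /cderivable !cderivE ERe EIm e1 e2.
Qed.

Lemma is_cderiveM {f g : R -> C} {x : R} : cderivable f x -> cderivable g x ->
  is_cderive (fun t => f t * g t) x (cderiv f x * g x + f x * cderiv g x).
Proof.
move=> [f1 f2] [g1 g2].
have ERe : (fun t => Re (f t * g t)) =
    (fun t => Re (f t) * Re (g t) - Im (f t) * Im (g t)).
  by apply/funext => t; rewrite ReM.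
have EIm : (fun t => Im (f t * g t)) =
    (fun t => Re (f t) * Im (g t) + Im (f t) * Re (g t)).
  by apply/funext => t; rewrite ImM.
have [d11 e11] := derivable_deriveM f1 g1; have [d22 e22] := derivable_deriveM f2 g2.
have [d12 e12] := derivable_deriveM f1 g2; have [d21 e21] := derivable_deriveM f2 g1.
have [d1 e1] := derivable_deriveB d11 d22; have [d2 e2] := derivable_deriveD d12 d21.
rewrite /is_cderive /cderivable !cderivE ERe EIm e1 e2 e11 e22 e12 e21; split => //.
case: (f x) => p q; case: (g x) => r s /=.
by apply/eqP; rewrite eq_complex /=; apply/andP; split; apply/eqP; ring.
Qed.

Lemma is_cderive_sum {I : eqType} {s : seq I} {F : I -> R -> C} {x : R} :
  (forall i, i \in s -> cderivable (F i) x) ->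
  is_cderive (fun t => \sum_(i <- s) F i t) x (\sum_(i <- s) cderiv (F i) x).
Proof.
elim: s => [|i s IH] dF.
  under eq_fun do rewrite big_nil.
  by rewrite big_nil; exact: is_cderive_cst.
have [ds es] := IH (fun j js => dF j (@mem_behead _ (i :: s) j js)).
under eq_fun do rewrite big_cons.
by rewrite big_cons -es; apply: is_cderiveD => //; apply: dF; rewrite mem_head.
Qed.

End ComplexCalculus.

Section Leibniz.
Context {R : realType}.
Local Notation C := R[i].
Local Notation normc := (@ComplexField.Normc.normc R).

(* The pairs (p, q) of the 2 ^ j terms f^(p) g^(q) of (f g)^(j), with
   repetitions instead of binomial coefficients. *)
Fixpoint leibniz_orders (j : nat) : seq (nat * nat) :=
  if j is j'.+1 then
    flatten [seq [:: (pq.1.+1, pq.2); (pq.1, pq.2.+1)] | pq <- leibniz_orders j']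
  else [:: (0, 0)%N].

Lemma leibniz_orders_le {j pq} :
  pq \in leibniz_orders j -> (pq.1 <= j)%N /\ (pq.2 <= j)%N.
Proof.
elim: j pq => [|j IH] pq /=; first by rewrite inE => /eqP ->.
move=> /flatten_mapP [[p q] /IH /= [hp hq]].
by rewrite !inE => /orP [] /eqP -> /=; split; rewrite ?ltnS //; apply: leqW.
Qed.

Lemma size_leibniz_orders j : size (leibniz_orders j) = (2 ^ j)%N.
Proof.
elim: j => [//|j IH] /=; rewrite expnS -IH.
by elim: (leibniz_orders j) => [//|pq s IHs] /=; rewrite IHs mulnS.
Qed.

Context {m : nat} (f g : 'I_m -> R -> C).

Definition dotf (x : R) : C := \sum_(k < m) f k x * g k x.

Definition leibniz (j : nat) (x : R) : C :=
  \sum_(k < m) \sum_(pq <- leibniz_orders j) cderivn pq.1 (f k) x * cderivn pq.2 (g k) x.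

Definition cderivable_lt (j : nat) (x : R) := forall k p, (p < j)%N ->
  cderivable (cderivn p (f k)) x /\ cderivable (cderivn p (g k)) x.

Lemma leibniz0 : leibniz 0 =1 dotf.
Proof. by move=> x; apply: eq_bigr => k _; rewrite big_seq1. Qed.

Lemma is_cderive_leibniz j x :
  cderivable_lt j.+1 x -> is_cderive (leibniz j) x (leibniz j.+1 x).
Proof.
move=> dfg.
have dterm pq : pq \in leibniz_orders j -> forall k,
    cderivable (cderivn pq.1 (f k)) x /\ cderivable (cderivn pq.2 (g k)) x.
  move=> /leibniz_orders_le [hp hq] k.
  by split; [apply: (dfg k pq.1 _).1 | apply: (dfg k pq.2 _).2].
have inner k : is_cderive
    (fun t => \sum_(pq <- leibniz_orders j) cderivn pq.1 (f k) t * cderivn pq.2 (g k) t) x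
    (\sum_(pq <- leibniz_orders j) (cderivn pq.1.+1 (f k) x * cderivn pq.2 (g k) x +
                                   cderivn pq.1 (f k) x * cderivn pq.2.+1 (g k) x)).
  have [d e] := is_cderive_sum (fun pq hpq =>
    (is_cderiveM (dterm pq hpq k).1 (dterm pq hpq k).2).1).
  split => //; rewrite e big_seq_cond [RHS]big_seq_cond.
  apply: eq_bigr => pq /andP[hpq _].
  exact: (is_cderiveM (dterm pq hpq k).1 (dterm pq hpq k).2).2.
have [d e] := @is_cderive_sum _ _ (index_enum 'I_m) _ x (fun k _ => (inner k).1).
split => //; rewrite e; apply: eq_bigr => k _.
rewrite (inner k).2 /= big_flatten /= big_map.
by apply: eq_bigr => pq _; rewrite big_cons big_seq1.
Qed.

Lemma cderivnS_dotf j (U : set R) x : open U -> U x ->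
  {in U, cderivn j dotf =1 leibniz j} -> cderivable_lt j.+1 x ->
  cderivn j.+1 dotf x = leibniz j.+1 x.
Proof.
move=> oU Ux eqU dfg; rewrite -(is_cderive_leibniz _ _ dfg).2.
apply: near_eq_cderiv; have : nbhs x U by apply: open_nbhs_nbhs.
by apply: filterS => z Uz; apply: eqU; rewrite inE.
Qed.

Lemma cderivn_dotf_on j (U : set R) : open U ->
  (forall z, U z -> cderivable_lt j z) -> {in U, cderivn j dotf =1 leibniz j}.
Proof.
move=> oU; elim: j => [|j IH] dfg z; rewrite inE => Uz; first by rewrite leibniz0.
apply: (@cderivnS_dotf j U z oU Uz) (dfg z Uz); apply: IH => w Uw k p hp.
by apply: dfg => //; exact: ltnW.
Qed.

Lemma normc_leibniz_le j x (M Y : R) :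
  (forall k p, (p <= j)%N -> normc (cderivn p (f k) x) <= M) ->
  (forall k p, (p <= j)%N -> normc (cderivn p (g k) x) <= Y) ->
  normc (leibniz j x) <= (m * 2 ^ j)%:R * (M * Y).
Proof.
move=> fM gY; apply: le_trans (normc_sum _ _ _) _.
have term_le k : normc (\sum_(pq <- leibniz_orders j)
    cderivn pq.1 (f k) x * cderivn pq.2 (g k) x) <= (2 ^ j)%:R * (M * Y).
  apply: le_trans (normc_sum _ _ _) _.
  rewrite -size_leibniz_orders -sum1_size natr_sum mulr_suml.
  rewrite big_seq_cond [X in _ <= X]big_seq_cond; apply: ler_sum => pq /andP[hpq _].
  have [hp hq] := leibniz_orders_le hpq.
  rewrite mulr1n mul1r ComplexField.Normc.normcM.
  by apply: ler_pM; rewrite ?normc_ge0 ?fM ?gY.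
apply: le_trans (ler_sum _ (fun k _ => term_le k)) _.
by rewrite sumr_const card_ord natrM -mulrA [X in _ <= X]mulr_natl.
Qed.

End Leibniz.

Section EssentialBounds.
Context {R : realType}.
Local Notation C := R[i].
Local Notation mu := (@lebesgue_measure R).
Local Notation normc := (@ComplexField.Normc.normc R).

Lemma aeS {P Q : R -> Prop} : (forall x, P x -> Q x) ->
  (\forall x \ae mu, P x) -> \forall x \ae mu, Q x.
Proof.
by move=> PQ; apply: filterS; [exact: (ae_filter_ringOfSetsType mu) | exact: PQ].
Qed.

Lemma aeS2 {P Q S : R -> Prop} : (forall x, P x -> Q x -> S x) ->
  (\forall x \ae mu, P x) -> (\forall x \ae mu, Q x) -> \forall x \ae mu, S x.
Proof.
by move=> PQS; apply: filterS2; [exact: (ae_filter_ringOfSetsType mu) | exact: PQS].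
Qed.

Lemma ae_forall (I : finType) (P : I -> R -> Prop) :
  (forall i, \forall x \ae mu, P i x) -> \forall x \ae mu, forall i, P i x.
Proof. by apply: filter_forall; exact: (ae_filter_ringOfSetsType mu). Qed.

Variables a b : R.
Hypothesis hab : a < b.

Lemma Linf_norm_ge0 (g : R -> C) : (0 <= Linf_norm a b g)%E.
Proof.
apply: ess_sup_gee.
  apply: (@lt_le_trans _ _ (mu `[a, b])); last by apply: le_measure; rewrite ?inE.
  by rewrite lebesgue_measure_itv /= lte_fin hab lte_fin subr_gt0.
by apply: aeW => x; case: ifP => // _; rewrite lee_fin normc_ge0.
Qed.

Lemma ae_le_Linf_norm (g : R -> C) :
  \forall x \ae mu, x \in `[a, b] -> ((normc (g x))%:E <= Linf_norm a b g)%E.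
Proof.
have := ess_sup_ge mu (fun x => if x \in `[a, b] then (normc (g x))%:E else 0%E).
by apply: aeS => x + xab; rewrite xab.
Qed.

Lemma Linf_norm_le (g : R -> C) (B : R) : 0 <= B ->
  (\forall x \ae mu, x \in `[a, b] -> normc (g x) <= B) -> (Linf_norm a b g <= B%:E)%E.
Proof.
move=> B0 gB; apply/ess_supP; apply: aeS gB => x gB.
by case: ifP => [/gB|_]; rewrite lee_fin.
Qed.

Lemma ae_le_fine_Linf_norm (g : R -> C) : (Linf_norm a b g < +oo)%E ->
  \forall x \ae mu, x \in `[a, b] -> normc (g x) <= fine (Linf_norm a b g).
Proof.
move=> gfin; apply: aeS (ae_le_Linf_norm g) => x gx /gx.
by case: (Linf_norm a b g) gfin => [r| |] //=; rewrite leeNy_eq.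
Qed.

Lemma ae_bounded_integrable (h : R -> R) (M : R) : measurable_fun `[a, b] h ->
  (\forall x \ae mu, x \in `[a, b] -> `|h x| <= M) -> mu.-integrable `[a, b] (EFin \o h).
Proof.
move=> mh [N [mN N0 hN]].
apply/(negligible_integrable mN _ _ N0).2 => //; first exact/measurable_EFinP.
apply: measurable_bounded_integrable.
- exact: measurableD.
- apply: (@le_lt_trans _ _ (mu `[a, b])).
    apply: le_measure; [apply/mem_set; exact: measurableD | exact/mem_set |].
    exact: subDsetl.
  by rewrite lebesgue_measure_itv /= lte_fin hab ltry.
- exact: measurable_funS mh.
- rewrite /bounded_near; near=> M0 => x /= [xab xN].
  have hM : `|h x| <= M by apply: contrapT => hM; apply: xN; apply: hN => /(_ xab).
  by apply: le_trans hM _; near: M0; exact: nbhs_pinfty_ge (num_real M).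
Unshelve. all: by end_near. Qed.

Definition cintegrable (g : R -> C) :=
  mu.-integrable `[a, b] (EFin \o (fun t => complex.Re (g t))) /\
  mu.-integrable `[a, b] (EFin \o (fun t => complex.Im (g t))).

Lemma Linf_norm_cintegrable (g : R -> C) :
  measurable_on a b g -> (Linf_norm a b g < +oo)%E -> cintegrable g.
Proof.
move=> [mRe mIm] gfin; have gB := ae_le_fine_Linf_norm _ gfin.
split; [apply: ae_bounded_integrable mRe _ | apply: ae_bounded_integrable mIm _];
  apply: aeS gB => x gx /gx; apply: le_trans; [exact: Re_le_normc | exact: Im_le_normc].
Qed.

End EssentialBounds.

Section Primitive.
Context {R : realType}.
Local Notation C := R[i].
Local Notation mu := (@lebesgue_measure R).
Local Notation Re := complex.Re.
Local Notation Im := complex.Im.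
Variables a b : R.
Hypothesis hab : a < b.

Definition primitive (g : R -> R) (y : R) : R := \int[mu]_(t in `[a, y]) g t.

Lemma near_itvoo {x : R} : a < x < b -> \forall y \near x, a < y < b.
Proof.
move=> xab; have : \forall y \near x, y \in `]a, b[.
  by apply: near_in_itvoo; rewrite in_itv.
by apply: filterS => y; rewrite in_itv.
Qed.

Lemma near_eq_continuous (F G : R -> R) x :
  {near x, F =1 G} -> {for x, continuous F} -> {for x, continuous G}.
Proof.
move=> FG cF; have GF : G @ x --> F x.
  by apply: cvg_trans cF; apply: near_eq_cvg; apply: filterS FG => y ->.
by move: GF; rewrite (nbhs_singleton FG).
Qed.

Lemma primitive_continuous {g : R -> R} {x : R} :
  mu.-integrable `[a, b] (EFin \o g) -> a < x < b -> {for x, continuous (primitive g)}.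
Proof.
move=> ig xab; have := parameterized_integral_continuous (ltW hab) ig.
by move/(within_continuous_continuous hab); apply; rewrite in_itv.
Qed.

Lemma primitive_derivable {g : R -> R} {x : R} : mu.-integrable `[a, b] (EFin \o g) ->
  a < x < b -> {for x, continuous g} -> derivable (primitive g) x 1.
Proof. by move=> ig /andP[ax xb] cg; have [] := continuous_FTC1_closed xb ig ax cg. Qed.

Lemma primitive_derivable_ae {g : R -> R} : mu.-integrable `[a, b] (EFin \o g) ->
  \forall x \ae mu, a < x < b -> derivable (primitive g) x 1.
Proof.
move=> ig; have := lebesgue_differentiation (integrable_locally (measurable_itv _) ig).
apply: aeS => x gx /[dup] xab /andP[ax xb].
have ig' : mu.-integrable [set` Interval (BLeft a) (BRight b)] (EFin \o (g \_ `[a, b])).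
  apply: eq_integrable ig => //= t tab.
  by rewrite /= patchE; rewrite inE in tab; rewrite mem_set.
have ax' : (BLeft a < BRight x)%E by rewrite /= lte_fin.
have [dF _] := FTC1_lebesgue_pt xb ig' ax' gx.
apply: near_eq_derivable dF; move: (near_itvoo xab); apply: filterS => y /andP[ay yb].
apply: eq_Rintegral => t; rewrite inE /= in_itv /= => /andP[a_t ty].
by rewrite patchE mem_set //= in_itv /= a_t (le_trans ty (ltW yb)).
Qed.

Definition ccontinuous (h : R -> C) x :=
  {for x, continuous (fun t => Re (h t))} /\ {for x, continuous (fun t => Im (h t))}.

Definition cprimitive (h g : R -> C) :=
  exists c : C, forall y, a < y < b -> h y = c + cintegral a y g.

Lemma cprimitive_near {h g : R -> C} {x : R} :
  cprimitive h g -> a < x < b -> exists c : C,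
  {near x, (fun y => Re c + primitive (fun t => Re (g t)) y) =1 (fun y => Re (h y))} /\
  {near x, (fun y => Im c + primitive (fun t => Im (g t)) y) =1 (fun y => Im (h y))}.
Proof.
move=> [c hc] xab; exists c.
by split; move: (near_itvoo xab); apply: filterS => y /hc ->; rewrite ?ReD ?ImD.
Qed.

Lemma cprimitive_continuous {h g : R -> C} {x : R} :
  cprimitive h g -> cintegrable a b g -> a < x < b -> ccontinuous h x.
Proof.
move=> hg [iRe iIm] xab; have [c [nRe nIm]] := cprimitive_near hg xab.
split; [apply: near_eq_continuous nRe _ | apply: near_eq_continuous nIm _];
  apply: continuousD; [exact: cst_continuous | exact: primitive_continuous iRe xab |
                       exact: cst_continuous | exact: primitive_continuous iIm xab].
Qed.

Lemma cprimitive_cderivable_at {h g : R -> C} {x : R} : cprimitive h g -> a < x < b ->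
  derivable (primitive (fun t => Re (g t))) x 1 ->
  derivable (primitive (fun t => Im (g t))) x 1 -> cderivable h x.
Proof.
move=> hg xab dRe dIm; have [c [nRe nIm]] := cprimitive_near hg xab.
split; [apply: near_eq_derivable nRe (derivable_deriveD _ dRe).1 |
        apply: near_eq_derivable nIm (derivable_deriveD _ dIm).1]; exact: derivable_cst.
Qed.

Lemma cprimitive_cderivable {h g : R -> C} {x : R} :
  cprimitive h g -> cintegrable a b g -> a < x < b -> ccontinuous g x -> cderivable h x.
Proof.
move=> hg [iRe iIm] xab [cRe cIm].
exact: cprimitive_cderivable_at hg xab
  (primitive_derivable iRe xab cRe) (primitive_derivable iIm xab cIm).
Qed.

Lemma cprimitive_cderivable_ae {h g : R -> C} : cprimitive h g -> cintegrable a b g ->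
  \forall x \ae mu, a < x < b -> cderivable h x.
Proof.
move=> hg [iRe iIm].
apply: aeS2 (primitive_derivable_ae iRe) (primitive_derivable_ae iIm) => x dRe dIm xab.
by apply: cprimitive_cderivable_at hg xab (dRe xab) (dIm xab).
Qed.

(* The differentiability of the derivatives of a function of W^k_oo: f^(p) is
   a primitive of the continuous f^(p+1) when p + 2 <= k, and f^(k-1) is a
   primitive of the integrable f^(k). *)
Definition regular (k : nat) (h : R -> C) :=
  (forall x, a < x < b -> forall p, (p.+2 <= k)%N -> cderivable (cderivn p h) x) /\
  (\forall x \ae mu, a < x < b -> forall p, (p < k)%N -> cderivable (cderivn p h) x).

Lemma isW_regular k (f : R -> C) : isW a b k f -> regular k f.
Proof.
move=> [Wb Wp].
have int j : (j <= k)%N -> cintegrable a b (cderivn j f).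
  by move=> /Wb [mf ff]; exact: Linf_norm_cintegrable.
have everywhere x : a < x < b -> forall p, (p.+2 <= k)%N -> cderivable (cderivn p f) x.
  move=> xab p pk; have cf : ccontinuous (cderivn p.+1 f) x.
    by apply: cprimitive_continuous (Wp p.+1 _) (int p.+2 _) xab; lia.
  by apply: cprimitive_cderivable (Wp p _) (int p.+1 _) xab cf; lia.
split => //; case: k Wp int everywhere {Wb} => [|k] Wp int everywhere; first exact: aeW.
apply: aeS (cprimitive_cderivable_ae (Wp k _) (int k.+1 _)) => // x dk xab p.
rewrite ltnS leq_eqVlt => /predU1P[-> | pk]; [exact: dk | exact: everywhere].
Qed.

Lemma regularW k (h : R -> C) : regular k.+1 h -> regular k h.
Proof.
move=> [hev hae]; split=> [x xab p pk|]; first exact: hev (leqW pk).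
by apply: aeS hae => x hx xab p pk; apply: hx (ltnW pk).
Qed.

Section RegularB.
Variables (k : nat) (f g : R -> C).
Hypotheses (rf : regular k f) (rg : regular k g).

Lemma cderivnB p x : (p < k)%N -> a < x < b ->
  cderivn p (fun t => f t - g t) x = cderivn p f x - cderivn p g x.
Proof.
elim: p x => [//|p IH] x pk xab.
rewrite [LHS]/= (@near_eq_cderiv _ _ (fun t => cderivn p f t - cderivn p g t)).
  exact: (is_cderiveB (rf.1 x xab p pk) (rg.1 x xab p pk)).2.
by move: (near_itvoo xab); apply: filterS => y; apply: IH (ltnW pk).
Qed.

Lemma regularB : regular k (fun t => f t - g t).
Proof.
have dB x p : a < x < b -> (p < k)%N -> cderivable (cderivn p f) x ->
    cderivable (cderivn p g) x -> cderivable (cderivn p (fun t => f t - g t)) x.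
  move=> xab pk df dg; apply: near_eq_cderivable (is_cderiveB df dg).1.
  by move: (near_itvoo xab); apply: filterS => y yab; rewrite cderivnB.
split=> [x xab p pk|].
  by apply: dB (rf.1 x xab p pk) (rg.1 x xab p pk) => //; exact: ltnW.
apply: aeS2 rf.2 rg.2 => x df dg xab p pk.
exact: dB (df xab p pk) (dg xab p pk).
Qed.

End RegularB.

End Primitive.

Section SobolevNorms.
Context {R : realType}.
Local Notation C := R[i].
Variables a b : R.
Hypothesis hab : a < b.

Lemma lee_term_sum {n : nat} (F : 'I_n -> \bar R) (i : 'I_n) :
  (forall j, 0 <= F j)%E -> (F i <= \sum_(j < n) F j)%E.
Proof. by move=> F0; rewrite (bigD1 i) //= leeDl // sume_ge0. Qed.

Lemma Wnorm_ge0 k (f : R -> C) : (0 <= Wnorm a b k f)%E.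
Proof. by apply: sume_ge0 => j _; exact: Linf_norm_ge0. Qed.

Lemma Wvec_norm_ge0 k m (y : R -> 'cV[C]_m) : (0 <= Wvec_norm a b k y)%E.
Proof. by apply: sume_ge0 => i _; exact: Wnorm_ge0. Qed.

Lemma Wmat_norm_ge0 k m (A : R -> 'M[C]_m) : (0 <= Wmat_norm a b k A)%E.
Proof. by apply: sume_ge0 => i _; apply: sume_ge0 => j _; exact: Wnorm_ge0. Qed.

Lemma Linf_norm_le_Wnorm k (f : R -> C) p : (p <= k)%N ->
  (Linf_norm a b (cderivn p f) <= Wnorm a b k f)%E.
Proof.
rewrite -ltnS => pk; pose P := Ordinal pk.
by apply: (lee_term_sum (fun j : 'I_k.+1 => Linf_norm a b (cderivn j f)) P) => j;
  exact: Linf_norm_ge0.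
Qed.

Lemma Wnorm_le_Wvec_norm k m (y : R -> 'cV[C]_m) i :
  (Wnorm a b k (fun x => y x i ord0) <= Wvec_norm a b k y)%E.
Proof.
by apply: (lee_term_sum (fun j : 'I_m => Wnorm a b k (fun x => y x j ord0))) => j;
  exact: Wnorm_ge0.
Qed.

Lemma Wnorm_le_Wmat_norm k m (A : R -> 'M[C]_m) i j :
  (Wnorm a b k (fun x => A x i j) <= Wmat_norm a b k A)%E.
Proof.
pose Ai i := \sum_(j < m) Wnorm a b k (fun x => A x i j).
apply: le_trans (lee_term_sum Ai i _).
  by apply: (lee_term_sum (fun j : 'I_m => Wnorm a b k (fun x => A x i j))) => j';
    exact: Wnorm_ge0.
by move=> i'; apply: sume_ge0 => j' _; exact: Wnorm_ge0.
Qed.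

Lemma Wvec_norm_leS k m (y : R -> 'cV[C]_m) :
  (Wvec_norm a b k y <= Wvec_norm a b k.+1 y)%E.
Proof.
apply: lee_sum => i _.
exact: (lee_sum_nneg_ord (fun j => Linf_norm a b (cderivn j (fun x => y x i ord0))) xpredT
  (fun _ _ => Linf_norm_ge0 _ _ hab _) _ _ (leqnSn k.+1)).
Qed.

Lemma isWvec_Wvec_norm_fin_num k m (y : R -> 'cV[C]_m) :
  isWvec a b k y -> Wvec_norm a b k y \is a fin_num.
Proof.
move=> Wy; apply/sum_fin_numP => i _ _; apply/sum_fin_numP => j _ _.
by rewrite ge0_fin_numE ?Linf_norm_ge0 //; have [/(_ j (leq_ord j)) []] := Wy i.
Qed.

End SobolevNorms.

Section ProductBound.
Context {R : realType}.
Local Notation C := R[i].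
Local Notation mu := (@lebesgue_measure R).
Local Notation normc := (@ComplexField.Normc.normc R).
Variables (a b : R) (m N : nat) (f g : 'I_m -> R -> C) (M Y : R).
Hypotheses (M0 : 0 <= M) (Y0 : 0 <= Y).
Hypotheses (rf : forall k, regular a b N (f k)) (rg : forall k, regular a b N (g k)).
Hypothesis fM : forall k p, (p <= N)%N ->
  \forall x \ae mu, x \in `[a, b] -> normc (cderivn p (f k) x) <= M.
Hypothesis gY : forall k p, (p <= N)%N ->
  \forall x \ae mu, x \in `[a, b] -> normc (cderivn p (g k) x) <= Y.

Lemma ae_itvcc_itvoo : \forall x \ae mu, x \in `[a, b] -> a < x < b.
Proof.
exists ([set a] `|` [set b]); split; first exact: measurableU.
  by rewrite measureU0 //; exact: lebesgue_measure_set1.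
move=> x /= /not_implyP[]; rewrite in_itv /= => /andP[ax xb] xab.
have [->|xa] := eqVneq x a; first by left.
have [->|xb'] := eqVneq x b; first by right.
by exfalso; apply: xab; rewrite !lt_neqAle eq_sym xa xb' ax xb.
Qed.

Lemma ae_cderivn_dotf : \forall x \ae mu, x \in `[a, b] ->
  forall j, (j <= N)%N -> cderivn j (dotf f g) x = leibniz f g j x.
Proof.
have rfg : \forall x \ae mu, a < x < b -> cderivable_lt f g N x.
  apply: aeS2 (ae_forall _ _ (fun k => (rf k).2)) (ae_forall _ _ (fun k => (rg k).2)).
  by move=> x df dg xab k p pN; split; [exact: df k xab p pN | exact: dg k xab p pN].
apply: aeS2 ae_itvcc_itvoo rfg => x xab dfg /xab {}xab [|j] jN; first by rewrite leibniz0.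
apply: (@cderivnS_dotf _ _ f g j `]a, b[%classic x); first exact: itv_open.
- by rewrite /= in_itv.
- apply: cderivn_dotf_on; first exact: itv_open.
  move=> z; rewrite /= in_itv => zab k p pj.
  have pN : (p.+2 <= N)%N by lia.
  by split; [exact: (rf k).1 z zab p pN | exact: (rg k).1 z zab p pN].
- by move=> k p pj; apply: (dfg xab k p); lia.
Qed.

Lemma Linf_norm_cderivn_dotf_le j : (j <= N)%N ->
  (Linf_norm a b (cderivn j (dotf f g)) <= ((m * 2 ^ N)%:R * (M * Y))%:E)%E.
Proof.
move=> jN; apply: Linf_norm_le; first by rewrite !mulr_ge0.
have fgB : \forall x \ae mu, forall k (p : 'I_N.+1), x \in `[a, b] ->
    normc (cderivn p (f k) x) <= M /\ normc (cderivn p (g k) x) <= Y.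
  apply: ae_forall => k; apply: ae_forall => p.
  apply: aeS2 (fM k p (ltn_ord p)) (gY k p (ltn_ord p)) => x fx gx xab.
  by split; [exact: fx | exact: gx].
apply: aeS2 ae_cderivn_dotf fgB => x dE fgx xab; rewrite dE //.
apply: le_trans (@normc_leibniz_le _ _ f g j x M Y _ _) _.
- move=> k p pj; have pN : (p < N.+1)%N by lia.
  exact: (fgx k (Ordinal pN) xab).1.
- move=> k p pj; have pN : (p < N.+1)%N by lia.
  exact: (fgx k (Ordinal pN) xab).2.
apply: ler_wpM2r; first by rewrite mulr_ge0.
by rewrite ler_nat leq_mul2l leq_exp2l // jN orbT.
Qed.

End ProductBound.

Section MultiplicationBound.
Context {R : realType}.
Local Notation C := R[i].
Variables (a b : R) (m N : nat).
Hypothesis hab : a < b.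

Lemma Lop_subE (A1 A2 : R -> 'M[C]_m) (y : R -> 'cV[C]_m) x :
  Lop A1 y x - Lop A2 y x = (A1 x - A2 x) *m y x.
Proof. by rewrite /Lop opprD addrACA subrr add0r mulmxBl. Qed.

Lemma Wvec_norm_mulmx_le (B : R -> 'M[C]_m) (y : R -> 'cV[C]_m) (Y : R) :
  (forall i j, regular a b N (fun x => B x i j)) ->
  (forall i, regular a b N (fun x => y x i ord0)) ->
  Wmat_norm a b N B \is a fin_num -> (Wvec_norm a b N y <= Y%:E)%E ->
  (Wvec_norm a b N (fun x => B x *m y x) <=
     ((m * N.+1 * (m * 2 ^ N))%:R * fine (Wmat_norm a b N B) * Y)%:E)%E.
Proof.
move=> rB ry Bfin yY; set W := fine (Wmat_norm a b N B).
have WE : Wmat_norm a b N B = W%:E by rewrite fineK.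
have W0 : 0 <= W by rewrite -lee_fin -WE (Wmat_norm_ge0 _ _ hab).
have Y0 : 0 <= Y by rewrite -lee_fin (le_trans (Wvec_norm_ge0 _ _ hab _ _ _) yY).
set c := (m * 2 ^ N)%:R * (W * Y).
have row_le i : (Wnorm a b N (fun x => (B x *m y x) i ord0) <= (c *+ N.+1)%:E)%E.
  have -> : (fun x => (B x *m y x) i ord0) =
      dotf (fun k x => B x i k) (fun k x => y x k ord0).
    by apply/funext => x; rewrite mxE.
  apply: (@le_trans _ _ (\sum_(j < N.+1) c%:E)).
    2: by rewrite sumEFin sumr_const card_ord.
  apply: lee_sum => j _.
  apply: (Linf_norm_cderivn_dotf_le _ _ _ _ _ _ _ _ W0 Y0 (rB i) ry _ _ j (leq_ord j));
    move=> k p pN.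
  - apply: aeS (ae_le_Linf_norm a b (cderivn p (fun x => B x i k))) => x Bx xab.
    rewrite -lee_fin -WE; apply: le_trans (Bx xab) _.
    apply: le_trans (Linf_norm_le_Wnorm _ _ hab _ _ _ pN) _.
    exact: Wnorm_le_Wmat_norm.
  - apply: aeS (ae_le_Linf_norm a b (cderivn p (fun x => y x k ord0))) => x yx xab.
    rewrite -lee_fin; apply: le_trans (yx xab) _; apply: le_trans yY.
    apply: le_trans (Linf_norm_le_Wnorm _ _ hab _ _ _ pN) _.
    exact: Wnorm_le_Wvec_norm.
apply: (@le_trans _ _ (\sum_(i < m) (c *+ N.+1)%:E)); first exact: lee_sum.
rewrite sumEFin sumr_const card_ord lee_fin /c.
rewrite -[_ *+ m]mulr_natr -[_ *+ N.+1]mulr_natr !natrM.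
by rewrite le_eqVlt; apply/predU1P; left; ring.
Qed.

End MultiplicationBound.

Section ConstantFunctions.
Context {R : realType}.
Local Notation C := R[i].
Local Notation normc := (@ComplexField.Normc.normc R).
Variables (a b : R) (m : nat).
Hypothesis hab : a < b.

Lemma cderivn_cst (c : C) p : cderivn p (fun=> c) = fun=> if p is 0 then c else 0.
Proof.
elim: p => [//|p IH]; rewrite [LHS]/= IH.
by apply/funext => x; exact: (is_cderive_cst _ _).2.
Qed.

Lemma Linf_norm_cst_le (c : C) : (Linf_norm a b (fun=> c) <= (normc c)%:E)%E.
Proof. by apply: Linf_norm_le; [exact: normc_ge0 | exact: aeW]. Qed.

Lemma isW_cst (c : C) k : isW a b k (fun=> c).
Proof.
split=> [j _|j _]; rewrite !cderivn_cst.
  split; first by split; exact: measurable_cst.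
  exact: le_lt_trans (Linf_norm_cst_le _) (ltry _).
exists (if j is 0 then c else 0) => x _; rewrite /cintegral /=.
by rewrite !Rintegral_cst // !mul0r addr0.
Qed.

Lemma Wnorm_cst_le (c : C) k : (Wnorm a b k (fun=> c) <= (normc c)%:E)%E.
Proof.
rewrite /Wnorm big_ord_recl big1 ?adde0 => [|i _]; first exact: Linf_norm_cst_le.
apply: le_anti; rewrite Linf_norm_ge0 // andbT cderivn_cst.
by apply: le_trans (Linf_norm_cst_le _) _; rewrite ComplexField.Normc.normc0.
Qed.

Lemma isWvec_cst (v : 'cV[C]_m) k : isWvec a b k (fun=> v).
Proof. by move=> i; exact: isW_cst. Qed.

Lemma Wvec_norm_cst_le (v : 'cV[C]_m) k :
  (Wvec_norm a b k (fun=> v) <= (\sum_(i < m) normc (v i ord0))%:E)%E.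
Proof. by rewrite -sumEFin; apply: lee_sum => i _; exact: Wnorm_cst_le. Qed.

Definition unit_fun (j : 'I_m) : R -> 'cV[C]_m := fun=> \col_i (i == j)%:R.

Lemma Wvec_norm_unit_fun_le k j : (Wvec_norm a b k (unit_fun j) <= 1)%E.
Proof.
apply: le_trans (Wvec_norm_cst_le _ _) _; rewrite lee_fin (bigD1 j) //= big1.
  by rewrite mxE eqxx ComplexField.Normc.normc1 addr0.
by move=> i /negbTE ij; rewrite mxE ij ComplexField.Normc.normc0.
Qed.

Lemma Wvec_norm_cst0_le k : (Wvec_norm a b k (fun=> (0 : 'cV[C]_m)%R) <= 1)%E.
Proof.
apply: le_trans (Wvec_norm_cst_le _ _) _; rewrite big1 ?lee01 // => i _.
by rewrite mxE ComplexField.Normc.normc0.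
Qed.

Lemma Wmat_norm_sub_unit_fun (A1 A2 : R -> 'M[C]_m) k :
  Wmat_norm a b k (fun x => A1 x - A2 x) =
  (\sum_(j < m) Wvec_norm a b k
     (fun x => (Lop A1 (unit_fun j) x - Lop A2 (unit_fun j) x)%R))%E.
Proof.
rewrite /Wmat_norm /Wvec_norm exchange_big; apply: eq_bigr => j _; apply: eq_bigr => i _.
congr Wnorm; apply/funext => x; rewrite Lop_subE [RHS]mxE (bigD1 j) //= big1 ?addr0.
  by rewrite !mxE eqxx mulr1.
by move=> k' /negbTE kj; rewrite !mxE kj mulr0.
Qed.

End ConstantFunctions.

Section OperatorNorm.
Context {R : realType}.
Local Notation C := R[i].
Variables (a b : R) (m : nat).
Hypothesis hab : a < b.

Definition mulW_const (N : nat) : R := (m * N.+1 * (m * 2 ^ N))%:R.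

Lemma Wvec_norm_Lop_sub_le N (A1 A2 : R -> 'M[C]_m) (y : R -> 'cV[C]_m) (Y : R) :
  isWmat a b N A1 -> isWmat a b N A2 -> isWvec a b N.+1 y ->
  Wmat_norm a b N (fun x => A1 x - A2 x) \is a fin_num ->
  (Wvec_norm a b N.+1 y <= Y%:E)%E ->
  (Wvec_norm a b N (fun x => (Lop A1 y x - Lop A2 y x)%R) <=
     (mulW_const N * Y)%:E * Wmat_norm a b N (fun x => (A1 x - A2 x)%R))%E.
Proof.
move=> WA1 WA2 Wy Afin yY.
have -> : (fun x => Lop A1 y x - Lop A2 y x) = (fun x => (A1 x - A2 x) *m y x).
  by apply/funext => x; exact: Lop_subE.
rewrite -[X in (_ <= _ * X)%E](fineK Afin) -EFinM mulrAC.
apply: Wvec_norm_mulmx_le => //.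
- move=> i j; have -> : (fun x => (A1 x - A2 x) i j) = (fun x => A1 x i j - A2 x i j).
    by apply/funext => x; rewrite !mxE.
  by apply: regularB; exact: isW_regular.
- by move=> i; apply: regularW; exact: isW_regular.
- exact: le_trans (Wvec_norm_leS _ _ hab _ _ _) yY.
Qed.

Lemma op_norm_diff_ge0 n (L1 L2 : (R -> 'cV[C]_m) -> R -> 'cV[C]_m) :
  (0 <= op_norm_diff a b n L1 L2)%E.
Proof.
apply: le_trans (Wvec_norm_ge0 _ _ hab _ _ (fun x => L1 (fun=> 0) x - L2 (fun=> 0) x)) _.
apply: ereal_sup_ubound; exists (fun=> 0) => //.
by split; [exact: isWvec_cst | exact: Wvec_norm_cst0_le].
Qed.

Lemma Wvec_norm_le_op_norm_diff n (L1 L2 : (R -> 'cV[C]_m) -> R -> 'cV[C]_m) y :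
  isWvec a b n y -> (Wvec_norm a b n y <= 1)%E ->
  (Wvec_norm a b n.-1 (fun x => (L1 y x - L2 y x)%R) <= op_norm_diff a b n L1 L2)%E.
Proof. by move=> Wy y1; apply: ereal_sup_ubound; exists y. Qed.

Lemma op_norm_diff_Lop_le N (A1 A2 : R -> 'M[C]_m) :
  isWmat a b N A1 -> isWmat a b N A2 ->
  Wmat_norm a b N (fun x => A1 x - A2 x) \is a fin_num ->
  (op_norm_diff a b N.+1 (Lop A1) (Lop A2) <=
     (mulW_const N)%:E * Wmat_norm a b N (fun x => (A1 x - A2 x)%R))%E.
Proof.
move=> WA1 WA2 Afin; apply: ge_ereal_sup => _ [y [Wy y1] <-].
by have := Wvec_norm_Lop_sub_le _ _ _ _ 1 WA1 WA2 Wy Afin y1; rewrite mulr1.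
Qed.

End OperatorNorm.

Section NullLimits.
Context {R : realType} {T : Type} {F : set_system T} {FF : Filter F}.

Lemma cvge_sum0 (I : Type) (s : seq I) (G : I -> T -> \bar R) :
  (forall i, G i t @[t --> F] --> 0%E) -> (\sum_(i <- s) G i t)%E @[t --> F] --> 0%E.
Proof.
move=> G0; elim: s => [|i s IH].
  by under eq_fun do rewrite big_nil; exact: cvg_cst.
have -> : (fun t => \sum_(j <- i :: s) G j t)%E =
    (fun t => G i t + \sum_(j <- s) G j t)%E.
  by apply/funext => t; rewrite big_cons.
by rewrite -[X in _ --> X]adde0; exact: cvgeD.
Qed.

Lemma cvge0_le_scale (f g : T -> \bar R) (k : R) :
  (\forall t \near F, 0 <= f t <= k%:E * g t)%E ->
  g t @[t --> F] --> 0%E -> f t @[t --> F] --> 0%E.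
Proof.
move=> fg g0; apply: (squeeze_cvge fg (cvg_cst _)).
by rewrite -(mule0 k%:E); exact: cvgeZl.
Qed.

End NullLimits.

Section NullFamilies.
Context {R : realType} {T : Type} {F : set_system T} {FF : Filter F}.
Local Notation C := R[i].
Variables (a b : R) (m N : nat) (A : T -> R -> 'M[C]_m) (A0 : R -> 'M[C]_m).
Hypothesis hab : a < b.
Hypotheses (WA0 : isWmat a b N A0) (WA : \forall t \near F, isWmat a b N (A t)).

Let dA t := Wmat_norm a b N (fun x => A t x - A0 x).

Lemma near_Wmat_fin_num : dA t @[t --> F] --> 0%E ->
  \forall t \near F, isWmat a b N (A t) /\ dA t \is a fin_num.
Proof. by move=> /fine_cvgP[dAfin _]; apply: filterS2 WA dAfin => t. Qed.

Lemma cvg0_Lop_sub : dA t @[t --> F] --> 0%E -> forall y, isWvec a b N.+1 y ->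
  Wvec_norm a b N (fun x => Lop (A t) y x - Lop A0 y x) @[t --> F] --> 0%E.
Proof.
move=> dA0 y Wy.
apply: (cvge0_le_scale _ _ (mulW_const m N * fine (Wvec_norm a b N.+1 y)) _ dA0).
apply: filterS (near_Wmat_fin_num dA0) => t [WAt dAt].
rewrite (Wvec_norm_ge0 _ _ hab) /=; apply: Wvec_norm_Lop_sub_le => //.
by rewrite fineK // isWvec_Wvec_norm_fin_num.
Qed.

Lemma cvg0_op_norm_Lop_sub : dA t @[t --> F] --> 0%E ->
  op_norm_diff a b N.+1 (Lop (A t)) (Lop A0) @[t --> F] --> 0%E.
Proof.
move=> dA0; apply: (cvge0_le_scale _ _ (mulW_const m N) _ dA0).
apply: filterS (near_Wmat_fin_num dA0) => t [WAt dAt].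
by rewrite (op_norm_diff_ge0 _ _ _ hab) /=; exact: op_norm_diff_Lop_le.
Qed.

Lemma cvg0_Wmat_sub_op_norm :
  op_norm_diff a b N.+1 (Lop (A t)) (Lop A0) @[t --> F] --> 0%E -> dA t @[t --> F] --> 0%E.
Proof.
move=> op0.
apply: (squeeze_cvge _ (cvg_cst 0%E) (cvge_sum0 _ (index_enum 'I_m) _ (fun=> op0))).
apply: nearW => t; rewrite (Wmat_norm_ge0 _ _ hab) /= /dA Wmat_norm_sub_unit_fun.
apply: lee_sum => j _; apply: (@Wvec_norm_le_op_norm_diff _ a b m N.+1).
- exact: isWvec_cst.
- exact: Wvec_norm_unit_fun_le.
Qed.

Lemma cvg0_Wmat_sub_Lop : (forall y, isWvec a b N.+1 y ->
    Wvec_norm a b N (fun x => Lop (A t) y x - Lop A0 y x) @[t --> F] --> 0%E) ->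
  dA t @[t --> F] --> 0%E.
Proof.
move=> Lop0; rewrite (eq_cvg _ _ (fun t => Wmat_norm_sub_unit_fun _ _ _ (A t) A0 N)).
by apply: cvge_sum0 => j; apply: Lop0; exact: isWvec_cst.
Qed.

End NullFamilies.

Theorem lemma5 (R : realType) (a b : R) (m n : nat) (eps0 : R)
  (A : R -> R -> 'M[R[i]]_m) :
  a < b -> (0 < n)%N -> 0 < eps0 ->
  (forall e, 0 <= e < eps0 -> isWmat a b n.-1 (A e)) ->
  let L := fun e => Lop (A e) in
  let I := (Wmat_norm a b n.-1 (fun x => A e x - A 0 x)) @[e --> 0^'+] --> 0%E in
  let a1 := (op_norm_diff a b n (L e) (L 0)) @[e --> 0^'+] --> 0%E in
  let a2 := forall y : R -> 'cV[R[i]]_m, isWvec a b n y ->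
     (Wvec_norm a b n.-1 (fun x => L e y x - L 0 y x)) @[e --> 0^'+] --> 0%E in
  (I <-> a1) /\ (a1 <-> a2).
Proof.
move=> hab n_gt0 eps0_gt0 WA; cbv beta zeta.
case: n n_gt0 WA => [//|N] _ WA; rewrite succnK in WA *.
have WA0 : isWmat a b N (A 0) by apply: WA; rewrite lexx.
have WAe : \forall e \near 0^'+, isWmat a b N (A e).
  near=> e; apply: WA; apply/andP; split; first apply: ltW.
  - by near: e; exact: nbhs_right_gt.
  - by near: e; exact: nbhs_right_lt.
split; split.
- exact: cvg0_op_norm_Lop_sub.
- exact: cvg0_Wmat_sub_op_norm.
- by move=> a1; apply: cvg0_Lop_sub => //; exact: cvg0_Wmat_sub_op_norm.
- by move=> a2; apply: cvg0_op_norm_Lop_sub => //; exact: cvg0_Wmat_sub_Lop.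
Unshelve. all: by end_near. Qed.
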